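(* Let $A$ and $B$ be disjoint cubic graphs with $v(A)\equiv 0\pmod 6$ and $v(B)\equiv 0\pmod 6$, let $a=a_1a_2\in E(A)$ and $b=b_1b_2\in E(B)$. Suppose $A$ has no $\Lambda$-factor containing $a$, and $B$ has no $\Lambda$-factor avoiding $b$. Let $G=AabB$. Then $v(G)\equiv 0\pmod 6$ and $G$ has no $\Lambda$-factor.
   Context: Graphs are finite, undirected, without loops or multiple edges; $v(G)=|V(G)|$. For disjoint graphs $A,B$ with $a=a_1a_2\in E(A)$, $b=b_1b_2\in E(B)$, $AabB$ is obtained from $(A-a)\cup(B-b)$ (edge deletions) by adding the new edges $a_1b_1$ and $a_2b_2$. A $\Lambda$-factor of a graph is a spanning subgraph each of whose components is a path on 3 vertices; it contains (avoids) an edge $e$ if $e$ is (is not) one of its edges. *)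

From mathcomp Require Import all_boot.
Set Implicit Arguments. Unset Strict Implicit. Unset Printing Implicit Defensive.

Definition simple_graph (T : finType) (e : rel T) : Prop :=
  symmetric e /\ irreflexive e.

Definition cubic (T : finType) (e : rel T) : Prop :=
  forall x : T, #|[set y | e x y]| = 3.

Definition is_edge_uv (T : finType) (u v x y : T) : bool :=
  ((x == u) && (y == v)) || ((x == v) && (y == u)).

(* f is (the edge relation of) a Lambda-factor of the graph e: a spanning
   subgraph (symmetric f contained in e) each of whose connected components
   is a path on 3 vertices u - v - w. *)
Definition lambda_factor (T : finType) (e f : rel T) : Prop :=
  [/\ symmetric f,
      (forall x y, f x y -> e x y) &
      forall x : T, exists u v w : T,
        [/\ u != v, v != w, u != w,
            [set y | connect f x y] = [set u; v; w] &
            forall p q, p \in [set u; v; w] -> q \in [set u; v; w] ->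
              f p q = is_edge_uv u v p q || is_edge_uv v w p q]].

(* The graph A a b B on the disjoint union TA + TB: delete the edges
   a = a1a2 and b = b1b2 and add the edges a1b1 and a2b2. *)
Definition glue (TA TB : finType) (eA : rel TA) (eB : rel TB)
    (a1 a2 : TA) (b1 b2 : TB) : rel (TA + TB) :=
  fun x y =>
    match x, y with
    | inl x, inl y => eA x y && ~~ is_edge_uv a1 a2 x y
    | inr x, inr y => eB x y && ~~ is_edge_uv b1 b2 x y
    | inl x, inr y => ((x == a1) && (y == b1)) || ((x == a2) && (y == b2))
    | inr x, inl y => ((y == a1) && (x == b1)) || ((y == a2) && (x == b2))
    end.

From mathcomp Require Import all_boot zify.
Set Implicit Arguments. Unset Strict Implicit. Unset Printing Implicit Defensive.

(* Let f be a Lambda-factor of G = AabB.  Its components have three vertices, and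
   only the edges a1b1 and a2b2 of G join the A-side to the B-side.  Counting the
   A-side modulo 3 shows that f uses both of these edges or neither.  If neither,
   f restricted to B is a Lambda-factor of B avoiding b.  If both, the components
   through a1 and a2 are distinct and meet A in 2 and 1 vertices, say x0-a1-b1 and
   a2-b2-y; replacing a1b1 and a2b2 by a1a2 and restricting to A yields a
   Lambda-factor of A containing a. *)

Section LambdaFactors.
Variable T : finType.
Implicit Types (e f : rel T) (u v w x y : T).

Lemma in_set3 p u v w : (p \in [set u; v; w]) = [|| p == u, p == v | p == w].
Proof. by rewrite !inE orbA. Qed.

Lemma card_set3 u v w : u != v -> v != w -> u != w -> #|[set u; v; w]| = 3.
Proof.
move=> uv vw uw; rewrite setUC cardsU1 cards2 uv !inE negb_or.
by rewrite eq_sym uw eq_sym vw.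
Qed.

Lemma is_edge_uvC u v p q : is_edge_uv u v p q = is_edge_uv u v q p.
Proof. by rewrite /is_edge_uv; case: (p == u); case: (q == v); case: (p == v); case: (q == u). Qed.

Definition path3 f u v w :=
  [/\ u != v, v != w, u != w &
      {in [set u; v; w] &, forall p q, f p q = is_edge_uv u v p q || is_edge_uv v w p q}].

Definition in_closed_path3 f x :=
  exists u v w, [/\ path3 f u v w, x \in [set u; v; w] &
                    {in [set u; v; w], forall p q, f p q -> q \in [set u; v; w]}].

Lemma path3_edges f u v w : path3 f u v w -> [/\ f u v, f v w & f w v].
Proof.
by case=> _ _ _ E; rewrite !E ?in_set3 ?eqxx ?orbT // /is_edge_uv !eqxx ?orbT.
Qed.

Lemma path3_intro f u v w : symmetric f -> irreflexive f ->
  u != v -> v != w -> u != w -> f u v -> f v w -> ~~ f u w -> path3 f u v w.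
Proof.
move=> fs firr uv vw uw fuv fvw nuw; split=> // p q.
rewrite !in_set3 => /or3P[]/eqP-> /or3P[]/eqP->;
  rewrite /is_edge_uv !eqxx ?firr ?(fs v u) ?(fs w v) ?(fs w u) ?fuv ?fvw ?(negbTE nuw);
  rewrite ?[v == u]eq_sym ?[w == v]eq_sym ?[w == u]eq_sym;
  by rewrite ?(negbTE uv) ?(negbTE vw) ?(negbTE uw).
Qed.

Lemma lambda_factor_component e f x : lambda_factor e f ->
  exists u v w, path3 f u v w /\ [set y | connect f x y] = [set u; v; w].
Proof. by case=> _ _ /(_ x) [u [v [w [? ? ? ? ?]]]]; exists u, v, w. Qed.

Lemma lambda_factor_intro e f : symmetric f -> subrel f e ->
  (forall x, in_closed_path3 f x) -> lambda_factor e f.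
Proof.
move=> fs fe blocks; split=> // x.
have [u [v [w [[uv vw uw E] xS Sclosed]]]] := blocks x.
exists u, v, w; split=> //.
have csym := sym_connect_sym fs.
have [fuv fvw _] := path3_edges (And4 uv vw uw E).
have uS y : y \in [set u; v; w] -> connect f u y.
  rewrite in_set3 => /or3P[]/eqP->; first exact: connect0.
    exact: connect1.
  exact: connect_trans (connect1 fuv) (connect1 fvw).
have clS : closed f [set u; v; w].
  by apply: (intro_closed csym) => p q fpq pS; apply: Sclosed fpq.
apply/setP => y; rewrite inE; apply/idP/idP => [cxy|yS].
  by rewrite -(closed_connect clS cxy).
by apply: connect_trans (uS y yS); rewrite csym uS.
Qed.

Lemma lambda_factor_neighbor e f x : lambda_factor e f -> exists y, f x y.
Proof.
move=> /(lambda_factor_component x) [u [v [w [P3 E]]]].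
have [fuv fvw fwv] := path3_edges P3.
have : x \in [set u; v; w] by rewrite -E inE connect0.
by rewrite in_set3 => /or3P[]/eqP->; [exists v | exists w | exists v].
Qed.

Lemma card_lambda_component e f x : lambda_factor e f ->
  #|[set y | connect f x y]| = 3.
Proof.
by move=> /(lambda_factor_component x) [u [v [w [[? ? ? _] ->]]]]; apply: card_set3.
Qed.

Lemma card_connect_closed_mod3 e f (D : {set T}) : lambda_factor e f ->
  (forall x y, x \in D -> connect f x y -> y \in D) -> #|D| %% 3 = 0.
Proof.
move=> lf Dclosed; have [fs _ _] := lf.
have csym := sym_connect_sym fs.
have eqD : {in D & &, equivalence_rel (connect f)}.
  move=> x y z _ _ _; split=> [|cxy]; first exact: connect0.
  by apply/idP/idP; [apply: connect_trans; rewrite csym | apply: connect_trans].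
rewrite (card_partition (equivalence_partitionP eqD)).
rewrite (eq_bigr (fun _ => 3)) ?sum_nat_const ?modnMl // => _ /imsetP[x Dx ->].
rewrite -(card_lambda_component x lf); apply: eq_card => y; rewrite !inE.
by case cxy: (connect f x y); rewrite ?andbT ?andbF //; apply: Dclosed cxy.
Qed.

Lemma lambda_factor_mono e e' f : subrel e e' -> lambda_factor e f -> lambda_factor e' f.
Proof. by move=> ee' [fs fe comps]; split=> // x y /fe /ee'. Qed.

End LambdaFactors.

Lemma connect_exit (T : finType) (f : rel T) (S : pred T) x y :
  x \in S -> y \notin S -> connect f x y ->
  exists p q, [/\ connect f x p, p \in S, q \notin S & f p q].
Proof.
move=> xS yS /connectP[s]; elim: s x xS => [|z s IHs] x xS /=.
  by move=> _ eyx; rewrite eyx xS in yS.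
case/andP=> fxz zs ey; case zS: (z \in S).
  have [p [q [czp pS qS fpq]]] := IHs z zS zs ey.
  by exists p, q; split=> //; apply: connect_trans (connect1 fxz) czp.
by exists x, z; rewrite connect0 zS.
Qed.

Lemma in_closed_path3_pull (T' T : finType) (h : T' -> T) (e f : rel T) (f' : rel T') x :
  injective h -> lambda_factor e f ->
  (forall t, connect f (h x) t -> exists t', t = h t') ->
  (forall p q, connect f (h x) (h p) -> f' p q = f (h p) (h q)) ->
  in_closed_path3 f' x.
Proof.
move=> hi lf onto agree.
have [u [v [w [[uv vw uw E] compE]]]] := lambda_factor_component (h x) lf.
have inS t : (t \in [set u; v; w]) = connect f (h x) t by rewrite -compE inE.
have [u' eu] : exists t, u = h t by apply: onto; rewrite -inS in_set3 eqxx.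
have [v' ev] : exists t, v = h t by apply: onto; rewrite -inS in_set3 eqxx orbT.
have [w' ew] : exists t, w = h t by apply: onto; rewrite -inS in_set3 eqxx !orbT.
subst u v w.
have mem3 p : (h p \in [set h u'; h v'; h w']) = (p \in [set u'; v'; w']).
  by rewrite !in_set3 !(inj_eq hi).
exists u', v', w'; split.
- split; rewrite -?(inj_eq hi) // => p q pS qS.
  rewrite agree -?inS ?mem3 // E ?mem3 //.
  by rewrite /is_edge_uv !(inj_eq hi).
- by rewrite -mem3 inS connect0.
- move=> p; rewrite -mem3 inS => cxp q f'pq; rewrite -mem3 inS.
  by apply: (connect_trans cxp); apply: connect1; rewrite -agree.
Qed.

Section Glue.
Variables (TA TB : finType) (eA : rel TA) (eB : rel TB) (a1 a2 : TA) (b1 b2 : TB).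
Hypotheses (sA : simple_graph eA) (sB : simple_graph eB).
Variable f : rel (TA + TB).
Hypothesis hf : lambda_factor (glue eA eB a1 a2 b1 b2) f.

Local Notation c1 := (f (inl a1) (inr b1)).
Local Notation c2 := (f (inl a2) (inr b2)).
Local Notation comp x := [set y | connect f x y].
Local Notation sideA := [set z : TA + TB | is_inl z].

Lemma factor_sym : symmetric f. Proof. by case: hf. Qed.

Lemma factor_connect_sym : connect_sym f. Proof. exact: sym_connect_sym factor_sym. Qed.

Lemma factor_glue : subrel f (glue eA eB a1 a2 b1 b2). Proof. by case: hf. Qed.

Lemma factor_irr x : f x x = false.
Proof. by apply/negbTE/negP => /factor_glue; case: x => x /=; rewrite ?sA.2 ?sB.2. Qed.

Lemma factor_cross_edge x y :
  f (inl x) (inr y) -> (x == a1) && (y == b1) || (x == a2) && (y == b2).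
Proof. exact: factor_glue. Qed.

Lemma connect_exit_sideA z y : z \in sideA -> y \notin sideA -> connect f z y ->
  (c1 && connect f (inl a1) z) || (c2 && connect f (inl a2) z).
Proof.
move=> zA yA /(connect_exit zA yA) [[p|p] [[q|q] [czp]]]; rewrite !inE //= => _ _ fpq.
rewrite !(factor_connect_sym (inl _) z).
by case/orP: (factor_cross_edge fpq) => /andP[/eqP ep /eqP eq]; subst p q; rewrite fpq czp ?orbT.
Qed.

Definition innerA := [set z in sideA | comp z \subset sideA].

Lemma innerA_closed x y : x \in innerA -> connect f x y -> y \in innerA.
Proof.
rewrite !inE => /andP[_ /subsetP sub] cxy.
have cyA t : connect f y t -> is_inl t.
  by move=> cyt; have := sub t; rewrite !inE; apply; apply: connect_trans cyt.
by rewrite cyA ?connect0 //; apply/subsetP => t; rewrite !inE; apply: cyA.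
Qed.

Lemma card_innerA : #|innerA| %% 3 = 0.
Proof. exact: card_connect_closed_mod3 hf innerA_closed. Qed.

Lemma mem_boundaryA z : (z \in sideA :\: innerA) =
  is_inl z && ((c1 && connect f (inl a1) z) || (c2 && connect f (inl a2) z)).
Proof.
rewrite in_setD [z \in innerA]inE [z \in sideA]inE andbC.
case zA: (is_inl z) => //=; apply/idP/idP => [/subsetPn [y]|].
  by rewrite !inE => czy yA; apply: connect_exit_sideA czy; rewrite inE.
case/orP => /andP[c cz]; apply/subsetPn; [exists (inr b1) | exists (inr b2)];
  rewrite !inE //; apply: connect_trans (connect1 c); by rewrite factor_connect_sym.
Qed.

Lemma card_sideA : #|sideA| = #|TA|.
Proof.
have -> : sideA = inl @: [set: TA].
  apply/setP => -[x|y]; rewrite !inE /=; first by rewrite imset_f.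
  by apply/esym/imsetP => -[].
by rewrite card_imset ?cardsT //; apply: inl_inj.
Qed.

Lemma card_boundaryA : #|TA| %% 3 = 0 -> #|sideA :\: innerA| %% 3 = 0.
Proof.
have sub : innerA \subset sideA by apply/subsetP => z; rewrite !inE => /andP[].
have := cardsID innerA sideA; rewrite (setIidPr sub) card_sideA.
have := card_innerA; lia.
Qed.

Lemma card_cross_component x y : f (inl x) (inr y) -> 0 < #|comp (inl x) :&: sideA| < 3.
Proof.
move=> fxy; have := cardsID sideA (comp (inl x)); rewrite (card_lambda_component _ hf).
have : 0 < #|comp (inl x) :&: sideA| by apply/card_gt0P; exists (inl x); rewrite !inE connect0.
have : 0 < #|comp (inl x) :\: sideA| by apply/card_gt0P; exists (inr y); rewrite !inE connect1.
lia.
Qed.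

Lemma cross_pair : #|TA| %% 3 = 0 -> c1 = c2.
Proof.
move=> hA3; have := card_boundaryA hA3.
case h1: c1; case h2: c2 => //.
- have -> : sideA :\: innerA = comp (inl a1) :&: sideA.
    by apply/setP => z; rewrite mem_boundaryA h1 h2 !inE /= ?orbF andbC.
  have := card_cross_component h1; lia.
- have -> : sideA :\: innerA = comp (inl a2) :&: sideA.
    by apply/setP => z; rewrite mem_boundaryA h1 h2 !inE /= ?orbF andbC.
  have := card_cross_component h2; lia.
Qed.

Lemma no_cross_factor : ~~ c1 -> ~~ c2 -> exists fB, lambda_factor eB fB /\ ~~ fB b1 b2.
Proof.
move=> n1 n2; exists (fun x y => f (inr x) (inr y)); split; last first.
  by apply/negP => /factor_glue; rewrite /= /is_edge_uv !eqxx andbF.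
apply: lambda_factor_intro => [x y | x y /factor_glue /andP[] // | x].
  exact: factor_sym.
apply: (in_closed_path3_pull inr_inj hf) => // -[t|t] cxt; last by exists t.
have := @connect_exit_sideA (inl t) (inr x); rewrite !inE factor_connect_sym.
by move=> /(_ isT isT cxt); rewrite (negbTE n1) (negbTE n2).
Qed.

Lemma boundaryA_connect z y : z \in sideA :\: innerA -> connect f z y -> y \in sideA ->
  y \in sideA :\: innerA.
Proof.
rewrite !in_setD => /andP[zI _] czy yA; rewrite yA andbT.
by apply: contra zI => yI; apply: innerA_closed yI _; rewrite factor_connect_sym.
Qed.

Section TwoCrossEdges.
Hypotheses (ha : eA a1 a2) (hb : eB b1 b2) (h1 : c1) (h2 : c2).

Lemma cross_components_disjoint : ~~ connect f (inl a1) (inl a2).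
Proof.
apply/negP => c12.
have a12 : a1 != a2 by apply: contraTneq ha => ->; rewrite sA.2.
have b12 : b1 != b2 by apply: contraTneq hb => ->; rewrite sB.2.
have : [set inl a1; inl a2] \subset comp (inl a1) :&: sideA.
  by apply/subsetP => z; rewrite !inE => /orP[]/eqP->; rewrite ?connect0 ?c12.
have : [set inr b1; inr b2] \subset comp (inl a1) :\: sideA.
  apply/subsetP => z; rewrite !inE => /orP[]/eqP->; rewrite /=; first exact: connect1.
  exact: connect_trans c12 (connect1 h2).
move=> /subset_leq_card + /subset_leq_card.
rewrite !cards2 !(inj_eq inl_inj) !(inj_eq inr_inj) a12 b12.
have := cardsID sideA (comp (inl a1)); rewrite (card_lambda_component _ hf); lia.
Qed.

Lemma card_cross_components : #|TA| %% 3 = 0 ->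
  #|comp (inl a1) :&: sideA| + #|comp (inl a2) :&: sideA| = 3.
Proof.
move=> hA3; have := card_boundaryA hA3.
have -> : sideA :\: innerA = (comp (inl a1) :&: sideA) :|: (comp (inl a2) :&: sideA).
  by apply/setP => z; rewrite mem_boundaryA h1 h2 !inE /= -andb_orl andbC.
rewrite cardsU.
have -> : (comp (inl a1) :&: sideA) :&: (comp (inl a2) :&: sideA) = set0.
  apply/setP => z; rewrite !inE; apply/negbTE; apply: contraNN cross_components_disjoint.
  case/andP=> /andP[c1z _] /andP[c2z _].
  by apply: connect_trans c1z _; rewrite factor_connect_sym.
have := card_cross_component h1; have := card_cross_component h2; rewrite cards0; lia.
Qed.

Lemma two_cross_cases : #|TA| %% 3 = 0 ->
  #|comp (inl a1) :&: sideA| = 2 \/ #|comp (inl a2) :&: sideA| = 2.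
Proof.
move=> hA3; have := card_cross_components hA3.
have := card_cross_component h1; have := card_cross_component h2; lia.
Qed.

Lemma two_cross_split : #|TA| %% 3 = 0 -> #|comp (inl a1) :&: sideA| = 2 ->
  exists2 x0, [/\ x0 != a1, x0 != a2 & f (inl x0) (inl a1)] &
    forall p, (inl p \in sideA :\: innerA) = (p \in [set x0; a1; a2]).
Proof.
move=> hA3 n1.
have n2 : #|comp (inl a2) :&: sideA| == 1 by apply/eqP; have := card_cross_components hA3; lia.
have a1C : inl a1 \in comp (inl a1) :&: sideA by rewrite !inE connect0.
have [x0 x0a1 C1] : exists2 x0, x0 != a1 & comp (inl a1) :&: sideA = [set inl x0; inl a1].
  have /cards1P[z Ez] : #|(comp (inl a1) :&: sideA) :\ inl a1| == 1.
    by move: n1; rewrite (cardsD1 (inl a1)) a1C add1n => -[->].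
  have : z \in (comp (inl a1) :&: sideA) :\ inl a1 by rewrite Ez set11.
  case: z Ez => [x0|y] Ez; rewrite !inE ?andbF // (inj_eq inl_inj) => /andP[x0a1 _].
  by exists x0; rewrite // -(setD1K a1C) Ez setUC.
have C2 : comp (inl a2) :&: sideA = [set inl a2].
  have /cards1P[z Ez] := n2.
  have : inl a2 \in comp (inl a2) :&: sideA by rewrite !inE connect0.
  by rewrite Ez => /set1P <-.
have cx0 : connect f (inl a1) (inl x0).
  have : inl x0 \in comp (inl a1) :&: sideA by rewrite C1 !inE eqxx.
  by rewrite !inE andbT.
have x0a2 : x0 != a2.
  by apply: contraNneq cross_components_disjoint => <-.
exists x0; last first.
  move=> p; rewrite mem_boundaryA h1 h2 /=.
  have memC q : (inl p \in comp q :&: sideA) = connect f q (inl p) by rewrite !inE andbT.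
  by rewrite -!memC C1 C2 !inE !(inj_eq inl_inj).
split=> //; have [[q|y] fx0q] := lambda_factor_neighbor (inl x0) hf.
  have : inl q \in comp (inl a1) :&: sideA by rewrite !inE (connect_trans cx0 (connect1 fx0q)).
  by rewrite C1 !inE !(inj_eq inl_inj) => /orP[]/eqP eq; subst q; rewrite ?factor_irr in fx0q.
by have := factor_cross_edge fx0q; rewrite (negbTE x0a1) (negbTE x0a2).
Qed.

Lemma two_cross_factor_split : #|TA| %% 3 = 0 -> #|comp (inl a1) :&: sideA| = 2 ->
  exists fA, lambda_factor eA fA /\ fA a1 a2.
Proof.
move=> hA3 n1; have [x0 [x0a1 x0a2 fx0a1] bnd] := two_cross_split hA3 n1.
have a12 : a1 != a2 by apply: contraTneq ha => ->; rewrite sA.2.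
pose fA p q := f (inl p) (inl q) || is_edge_uv a1 a2 p q.
exists fA; split; last by rewrite /fA /is_edge_uv !eqxx orbT.
have fA_sym : symmetric fA by move=> p q; rewrite /fA factor_sym is_edge_uvC.
apply: lambda_factor_intro => // [p q /orP[/factor_glue/andP[] // | e] | x].
  by case/orP: e => /andP[/eqP-> /eqP->]; rewrite // sA.1.
have [xS | xS] := boolP (x \in [set x0; a1; a2]).
  exists x0, a1, a2; split=> //.
    apply: path3_intro => //.
    - move=> p; rewrite /fA factor_irr /is_edge_uv /=.
      by case: (p =P a1) => [->|_]; rewrite ?(negbTE a12) ?andbF.
    - by rewrite /fA fx0a1.
    - by rewrite /fA /is_edge_uv !eqxx orbT.
    rewrite /fA /is_edge_uv (negbTE x0a1) (negbTE x0a2) /= orbF.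
    apply: contraNN cross_components_disjoint => fx0a2.
    by apply: connect_trans (connect1 _) (connect1 fx0a2); rewrite factor_sym.
  move=> p pS q /orP[fpq | e].
    rewrite -bnd in pS; rewrite -bnd; apply: (boundaryA_connect pS (connect1 fpq)).
    by rewrite inE.
  by case/orP: e => /andP[_ /eqP->]; rewrite !inE eqxx ?orbT.
have xI : inl x \in innerA by move: (bnd x); rewrite (negbTE xS) in_setD inE andbT => /negbFE.
apply: (in_closed_path3_pull inl_inj hf) => [[t|t] cxt | p q cxp]; first by exists t.
  by have := innerA_closed xI cxt; rewrite !inE.
have : p \notin [set x0; a1; a2] by rewrite -bnd in_setD (innerA_closed xI cxp).
rewrite !inE !negb_or => /andP[/andP[_ pa1] pa2].
by rewrite /fA /is_edge_uv (negbTE pa1) (negbTE pa2) /= orbF.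
Qed.
End TwoCrossEdges.
End Glue.

Lemma glue_swap (TA TB : finType) (eA : rel TA) (eB : rel TB) a1 a2 b1 b2 :
  glue eA eB a2 a1 b2 b1 =2 glue eA eB a1 a2 b1 b2.
Proof. by case=> x [] y /=; rewrite /is_edge_uv orbC. Qed.

Lemma two_cross_factor (TA TB : finType) (eA : rel TA) (eB : rel TB) a1 a2 b1 b2 f :
  simple_graph eA -> simple_graph eB -> eA a1 a2 -> eB b1 b2 ->
  lambda_factor (glue eA eB a1 a2 b1 b2) f -> #|TA| %% 3 = 0 ->
  f (inl a1) (inr b1) -> f (inl a2) (inr b2) ->
  exists fA, lambda_factor eA fA /\ fA a1 a2.
Proof.
move=> sA sB ha hb hf hA3 h1 h2.
have [n1 | n2] := two_cross_cases sA sB hf ha hb h1 h2 hA3.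
  exact: (two_cross_factor_split sA sB hf ha hb h1 h2 hA3 n1).
have hf' : lambda_factor (glue eA eB a2 a1 b2 b1) f.
  by apply: lambda_factor_mono hf => x y; rewrite glue_swap.
have ha' : eA a2 a1 by rewrite sA.1.
have hb' : eB b2 b1 by rewrite sB.1.
have [fA [lfA fAa21]] :=
  two_cross_factor_split sA sB hf' ha' hb' h2 h1 hA3 n2.
by exists fA; split=> //; case: lfA => fAsym _ _; rewrite fAsym.
Qed.

Theorem mainTheorem13 (TA TB : finType) (eA : rel TA) (eB : rel TB)
    (a1 a2 : TA) (b1 b2 : TB) :
  simple_graph eA -> simple_graph eB -> cubic eA -> cubic eB ->
  #|TA| %% 6 = 0 -> #|TB| %% 6 = 0 ->
  eA a1 a2 -> eB b1 b2 ->
  ~ (exists f, lambda_factor eA f /\ f a1 a2) ->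
  ~ (exists f, lambda_factor eB f /\ ~~ f b1 b2) ->
  #|((TA + TB)%type : finType)| %% 6 = 0 /\ ~ (exists f, lambda_factor (glue eA eB a1 a2 b1 b2) f).
Proof.
move=> sA sB _ _ hA6 hB6 ha hb noA noB; split; first by rewrite card_sum; lia.
case=> f hf; have hA3 : #|TA| %% 3 = 0 by lia.
have := cross_pair hf hA3; case h1: (f (inl a1) (inr b1)) => /esym h2.
  by apply: noA; apply: two_cross_factor sA sB ha hb hf hA3 h1 h2.
by apply: noB; apply: no_cross_factor hf (negbT h1) (negbT h2).
Qed.
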